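(* Let $Q=\{q(k)\}_{k\ge1}$ be a strictly increasing sequence of positive integers with $q(k+1)/q(k)\to\infty$. Then there exists $\alpha\in(\tfrac13,\tfrac23)$ such that $\{\alpha q(k)\}\to0$ as $k\to\infty$, where $\{x\}$ denotes the fractional part of $x$.
   Context: $\{x\}=x-\lfloor x\rfloor$ denotes the fractional part of a real number $x$. *)

From Stdlib Require Import Reals.
Open Scope R_scope.

(* Fractional part {x} = x - floor x; Stdlib's frac_part r = r - IZR (Int_part r),
   where Int_part r = up r - 1 is the floor. *)
Definition frac (x : R) : R := frac_part x.

From Stdlib Require Import Reals Lra Lia ZArith.
Open Scope R_scope.

(* Put Q i := q (K + 1 + i), where K is chosen so that
   q (k+1) > 7 q k for all k >= K; then Q 0 >= 7 and Q grows at least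
   geometrically.  Starting from an integer numerator y 0, define
   y (i+1) := the least integer > (y i / Q i) * Q (i+1) and the rationals
   x i := y i / Q i.  Then x i < x (i+1) <= x i + 1 / Q (i+1), so the closed
   intervals [x i, x i + 2 / Q (i+1)] are nested (this uses Q (i+1) >= 2 Q i);
   their common point alpha, obtained as the supremum of the x i, satisfies
   y i <= alpha Q i <= y i + 2 Q i / Q (i+1) for every i.  Choosing
   y 0 := the least integer > Q 0 / 3 places alpha in (1/3, 2/3), and since
   Q i / Q (i+1) -> 0 the fractional parts {alpha q k} tend to 0.
   The file first proves the nested-interval construction for an arbitrary
   real sequence Q with Q (i+1) >= 2 Q i, then a criterion for fractional
   parts to tend to 0, and finally assembles the theorem. *)

Section NestedApproximation.

Variable Q : nat -> R.
Hypothesis Q_pos : forall i, 0 < Q i.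
Hypothesis Q_double : forall i, 2 * Q i <= Q (S i).
Variable start : Z.

Fixpoint numer (i : nat) : Z :=
  match i with
  | O => start
  | S j => up (IZR (numer j) * Q (S j) / Q j)
  end.

Definition approx (i : nat) : R := IZR (numer i) / Q i.

Lemma numer_approx i : IZR (numer i) = approx i * Q i.
Proof. unfold approx; field; apply Rgt_not_eq, Q_pos. Qed.

Lemma approx_step i : approx i < approx (S i) <= approx i + 1 / Q (S i).
Proof.
  pose proof (Q_pos i) as Qi; pose proof (Q_pos (S i)) as Qs.
  destruct (archimed (IZR (numer i) * Q (S i) / Q i)) as [lo hi].
  assert (target : IZR (numer i) * Q (S i) / Q i = approx i * Q (S i))
    by (unfold approx; field; lra).
  rewrite target in lo, hi.
  assert (rounded : IZR (numer (S i)) = IZR (up (approx i * Q (S i))))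
    by (simpl; rewrite target; reflexivity).
  rewrite numer_approx in rounded; rewrite <- rounded in lo, hi.
  split.
  - exact (Rmult_lt_reg_r _ _ _ Qs lo).
  - apply (Rmult_le_reg_r (Q (S i))); [exact Qs|].
    replace ((approx i + 1 / Q (S i)) * Q (S i)) with (approx i * Q (S i) + 1)
      by (field; lra).
    lra.
Qed.

Lemma approx_incr i j : (i <= j)%nat -> approx i <= approx j.
Proof.
  induction 1 as [|j _ IH]; [lra|].
  pose proof (approx_step j); lra.
Qed.

(* The intervals [x j, x j + 2 / Q (j+1)] are nested: their right endpoints
   decrease, because 2 / Q (j+2) <= 1 / Q (j+1). *)
Lemma right_end_decr i j :
  (i <= j)%nat -> approx j + 2 / Q (S j) <= approx i + 2 / Q (S i).
Proof.
  induction 1 as [|j _ IH]; [lra|].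
  pose proof (approx_step j) as [_ step].
  pose proof (Q_pos (S j)); pose proof (Q_double (S j)).
  assert (2 / Q (S (S j)) <= 1 / Q (S j)).
  { apply (Rmult_le_reg_r (Q (S (S j)) * Q (S j))); [nra|].
    unfold Rdiv; field_simplify; lra. }
  lra.
Qed.

Lemma approx_below i j : approx j <= approx i + 2 / Q (S i).
Proof.
  assert (gap : forall k, 0 < 2 / Q (S k))
    by (intro k; apply Rdiv_lt_0_compat; [lra | apply Q_pos]).
  destruct (le_lt_dec i j) as [h | h].
  - pose proof (right_end_decr i j h); pose proof (gap j); lra.
  - pose proof (approx_incr j i (Nat.lt_le_incl _ _ h)); pose proof (gap i); lra.
Qed.

Lemma nested_limit :
  exists alpha, forall i, approx i <= alpha <= approx i + 2 / Q (S i).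
Proof.
  set (E := fun r => exists i, r = approx i).
  destruct (completeness E) as [alpha [upper least]].
  - exists (approx 0 + 2 / Q 1); intros r [j ->]; apply approx_below.
  - exists (approx 0), 0%nat; reflexivity.
  - exists alpha; intro i; split.
    + apply upper; exists i; reflexivity.
    + apply least; intros r [j ->]; apply approx_below.
Qed.

Lemma simultaneous_approximation :
  exists alpha, forall i,
    IZR (numer i) <= alpha * Q i <= IZR (numer i) + 2 * Q i / Q (S i).
Proof.
  destruct nested_limit as [alpha Halpha]; exists alpha; intro i.
  pose proof (Q_pos i); pose proof (Q_pos (S i)).
  destruct (Halpha i) as [lo hi].
  rewrite numer_approx; split.
  - apply Rmult_le_compat_r; lra.
  - replace (approx i * Q i + 2 * Q i / Q (S i))
      with ((approx i + 2 / Q (S i)) * Q i) by (field; lra).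
    apply Rmult_le_compat_r; lra.
Qed.

End NestedApproximation.

Lemma frac_int_plus (n : Z) (e : R) : 0 <= e < 1 -> frac (IZR n + e) = e.
Proof.
  intros [e0 e1]; unfold frac, frac_part, Int_part.
  rewrite <- (tech_up (IZR n + e) (n + 1)); rewrite ?plus_IZR; simpl; try lra.
  rewrite Z.add_simpl_r; ring.
Qed.

Lemma frac_cv_0 (u r : nat -> R) (K : nat) :
  (forall k, (K <= k)%nat -> exists n : Z, IZR n <= u k <= IZR n + r k) ->
  (forall eps, eps > 0 -> exists N, forall k, (N <= k)%nat -> r k < eps) ->
  Un_cv (fun k => frac (u k)) 0.
Proof.
  intros near small eps heps.
  destruct (small (Rmin eps 1)) as [N HN]; [apply Rmin_pos; lra|].
  exists (Nat.max N K); intros k hk; unfold R_dist.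
  destruct (near k ltac:(lia)) as [n [lo hi]].
  pose proof (HN k ltac:(lia)); pose proof (Rmin_l eps 1); pose proof (Rmin_r eps 1).
  replace (u k) with (IZR n + (u k - IZR n)) by ring.
  rewrite frac_int_plus by lra.
  rewrite Rminus_0_r, Rabs_right; lra.
Qed.

Lemma eventually_growth (q : nat -> nat)
  (hpos : forall k, (1 <= k)%nat -> (0 < q k)%nat)
  (hratio : forall M : R, exists N : nat, forall k, (N <= k)%nat -> (1 <= k)%nat ->
              INR (q (S k)) / INR (q k) > M) (M : R) :
  exists K, (1 <= K)%nat /\
    forall k, (K <= k)%nat -> M * INR (q k) < INR (q (S k)).
Proof.
  destruct (hratio M) as [N HN].
  exists (Nat.max N 1); split; [lia|]; intros k hk.
  assert (qk : 0 < INR (q k)) by (apply lt_0_INR, hpos; lia).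
  pose proof (HN k ltac:(lia) ltac:(lia)) as h.
  replace (INR (q (S k))) with (INR (q (S k)) / INR (q k) * INR (q k)) by (field; lra).
  apply Rmult_lt_compat_r; lra.
Qed.

Lemma ratio_tail (q : nat -> nat)
  (hpos : forall k, (1 <= k)%nat -> (0 < q k)%nat)
  (hratio : forall M : R, exists N : nat, forall k, (N <= k)%nat -> (1 <= k)%nat ->
              INR (q (S k)) / INR (q k) > M) :
  forall eps, eps > 0 ->
    exists N, forall k, (N <= k)%nat -> 2 * INR (q k) / INR (q (S k)) < eps.
Proof.
  intros eps heps.
  destruct (eventually_growth q hpos hratio (2 / eps)) as [N [N1 growN]].
  exists N; intros k hk.
  assert (0 < INR (q k)) by (apply lt_0_INR, hpos; lia).
  assert (0 < INR (q (S k))) by (apply lt_0_INR, hpos; lia).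
  pose proof (growN k hk) as h.
  apply (Rmult_lt_reg_r (INR (q (S k)) / eps)); [apply Rdiv_lt_0_compat; lra|].
  replace (2 * INR (q k) / INR (q (S k)) * (INR (q (S k)) / eps))
    with (2 / eps * INR (q k)) by (field; lra).
  replace (eps * (INR (q (S k)) / eps)) with (INR (q (S k))) by (field; lra).
  exact h.
Qed.

Lemma start_bounds (Q0 Q1 alpha : R) :
  7 <= Q0 -> 2 * Q0 <= Q1 ->
  IZR (up (Q0 / 3)) <= alpha * Q0 <= IZR (up (Q0 / 3)) + 2 * Q0 / Q1 ->
  1/3 < alpha < 2/3.
Proof.
  intros Q0_ge Q1_ge [lo hi].
  destruct (archimed (Q0 / 3)) as [a1 a2].
  assert (2 * Q0 / Q1 <= 1).
  { apply (Rmult_le_reg_r Q1); [lra|]. unfold Rdiv; field_simplify; lra. }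
  split; nra.
Qed.

Theorem lemma3 (q : nat -> nat)
  (hpos : forall k, (1 <= k)%nat -> (0 < q k)%nat)
  (hinc : forall k, (1 <= k)%nat -> (q k < q (S k))%nat)
  (hratio : forall M : R, exists N : nat, forall k, (N <= k)%nat -> (1 <= k)%nat ->
              INR (q (S k)) / INR (q k) > M) :
  exists alpha : R, 1/3 < alpha /\ alpha < 2/3 /\
    Un_cv (fun k => frac (alpha * INR (q k))) 0.
Proof.
  destruct (eventually_growth q hpos hratio 7) as [K [K1 grow7]].
  set (Q := fun i => INR (q (S K + i)%nat)).
  assert (Q_pos : forall i, 0 < Q i) by (intro i; apply lt_0_INR, hpos; lia).
  assert (Q_grow : forall i, 7 * Q i < Q (S i))
    by (intro i; unfold Q; rewrite Nat.add_succ_r; apply grow7; lia).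
  assert (Q_double : forall i, 2 * Q i <= Q (S i))
    by (intro i; pose proof (Q_pos i); pose proof (Q_grow i); lra).
  assert (Q0_ge : 7 <= Q 0%nat).
  { assert (1 <= INR (q K)) by (apply (le_INR 1), hpos; lia).
    pose proof (grow7 K (le_n K)); unfold Q; rewrite Nat.add_0_r; lra. }
  destruct (simultaneous_approximation Q Q_pos Q_double (up (Q 0%nat / 3)))
    as [alpha Halpha].
  exists alpha.
  destruct (start_bounds (Q 0%nat) (Q 1%nat) alpha Q0_ge (Q_double 0%nat) (Halpha 0%nat)).
  do 2 (split; [assumption|]).
  apply (frac_cv_0 _ (fun k => 2 * INR (q k) / INR (q (S k))) (S K)).
  - intros k hk; eexists; specialize (Halpha (k - S K)%nat); unfold Q in Halpha.
    replace (S K + S (k - S K))%nat with (S k) in Halpha by lia.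
    replace (S K + (k - S K))%nat with k in Halpha by lia.
    exact Halpha.
  - exact (ratio_tail q hpos hratio).
Qed.
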